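(* Let $G=(V,E)$ be a finite undirected graph with independence number $\alpha(G)$, and for $v\in V$ let $N_{\le1}(v)$ be the set consisting of $v$ and its neighbors in $G$. Let $K\ge1$, $A=\{1,\dots,K\}$, and for each $v\in V$ let $\boldsymbol p(v)=(p(1,v),\dots,p(K,v))$ be a probability distribution on $A$. Define, for $i\in A$ and $v\in V$, $$q(i,v)=1-\prod_{v'\in N_{\le1}(v)}\bigl(1-p(i,v')\bigr).$$ Then for every $i\in A$ (with the convention that terms with $p(i,v)=0$ contribute $0$), $$\sum_{v\in V}\frac{p(i,v)}{q(i,v)}\le\frac{1}{1-e^{-1}}\Bigl(\alpha(G)+\sum_{v\in V}p(i,v)\Bigr).$$
   Context: The independence number $\alpha(G)$ is the maximum size of a set of vertices no two of which are joined by an edge. *)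

From mathcomp Require Import all_boot.
From Stdlib Require Import Reals.
Set Implicit Arguments. Unset Strict Implicit. Unset Printing Implicit Defensive.

(* A finite simple undirected graph: vertex type V : finType, edge relation
   e : rel V, assumed symmetric and irreflexive in the theorem. *)

Definition closed_nbhd (V : finType) (e : rel V) (v : V) : {set V} :=
  [set w | (w == v) || e v w].

Definition independent (V : finType) (e : rel V) (S : {set V}) : bool :=
  [forall x in S, forall y in S, ~~ e x y].

Definition alpha (V : finType) (e : rel V) : nat :=
  \max_(S : {set V} | independent e S) #|S|.

Definition Rsum (I : finType) (F : I -> R) : R := \big[Rplus/0%R]_(i : I) F i.

Definition qf (V : finType) (e : rel V) (K : nat) (p : 'I_K -> V -> R)
  (i : 'I_K) (v : V) : R :=
  (1 - \big[Rmult/1%R]_(w in closed_nbhd e v) (1 - p i w))%R.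

Definition ratio_term (V : finType) (e : rel V) (K : nat) (p : 'I_K -> V -> R)
  (i : 'I_K) (v : V) : R :=
  if Req_EM_T (p i v) 0%R then 0%R else (p i v / qf e p i v)%R.

(** The local greedy argument behind the Caro–Wei bound gives, for any
    nonnegative weights [P], an independent set of size at least
    [sum_v P(v) / P(N[v])]: take a vertex [u] minimising [P(N[u])], note that
    the terms of [N[u]] sum to at most [1], and recurse on the graph with [N[u]] removed.
    On the other hand [1 - q(i,v) <= exp (- P(N[v]))] with [P = p(i,.)], and
    [1 / (1 - exp (- s)) <= (1 / s + 1) / (1 - exp (-1))] for [s > 0], by
    convexity of [exp] when [s <= 1] and monotonicity when [s > 1]. *)

From mathcomp Require Import all_boot.
From Stdlib Require Import Reals Lra Psatz.
From HB Require Import structures.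

Set Implicit Arguments. Unset Strict Implicit. Unset Printing Implicit Defensive.

Local Open Scope R_scope.

Lemma Rplus_assoc' : associative Rplus. Proof. by move=> *; rewrite Rplus_assoc. Qed.
Lemma Rmult_assoc' : associative Rmult. Proof. by move=> *; rewrite Rmult_assoc. Qed.
HB.instance Definition _ :=
  Monoid.isComLaw.Build R 0 Rplus Rplus_assoc' Rplus_comm Rplus_0_l.
HB.instance Definition _ :=
  Monoid.isComLaw.Build R 1 Rmult Rmult_assoc' Rmult_comm Rmult_1_l.

Notation "\sum_ ( i <- r | P ) F" := (\big[Rplus/0]_(i <- r | P) F) : R_scope.
Notation "\sum_ ( i 'in' A ) F" := (\big[Rplus/0]_(i in A) F) : R_scope.
Notation "\sum_ i F" := (\big[Rplus/0]_i F) : R_scope.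
Notation "\prod_ ( i <- r | P ) F" := (\big[Rmult/1]_(i <- r | P) F) : R_scope.
Notation "\prod_ ( i 'in' A ) F" := (\big[Rmult/1]_(i in A) F) : R_scope.

Section RealBigOps.
Variables (I : Type) (r : seq I) (P : pred I).

Lemma Rsum_le (F G : I -> R) :
  (forall i, P i -> F i <= G i) -> \sum_(i <- r | P i) F i <= \sum_(i <- r | P i) G i.
Proof. by move=> FG; apply: (big_ind2 Rle) => *; [lra | lra | exact: FG]. Qed.

Lemma Rsum_ge0 (F : I -> R) :
  (forall i, P i -> 0 <= F i) -> 0 <= \sum_(i <- r | P i) F i.
Proof. by move=> F0; apply: (big_ind (Rle 0)) => *; [lra | lra | exact: F0]. Qed.

Lemma Rsum_mulr (F : I -> R) c :
  \sum_(i <- r | P i) (F i * c) = (\sum_(i <- r | P i) F i) * c.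
Proof. by apply: (big_ind2 (fun x y => x = y * c)) => // [|? ? ? ? -> ->]; lra. Qed.

Lemma Rprod_le (F G : I -> R) :
  (forall i, P i -> 0 <= F i <= G i) ->
  0 <= \prod_(i <- r | P i) F i <= \prod_(i <- r | P i) G i.
Proof.
move=> FG; apply: (big_ind2 (fun x y => 0 <= x <= y)) => //; first lra.
move=> x1 x2 y1 y2 [? ?] [? ?]; split; first nra.
exact: Rmult_le_compat.
Qed.

Lemma exp_opp_sum (F : I -> R) :
  exp (- \sum_(i <- r | P i) F i) = \prod_(i <- r | P i) exp (- F i).
Proof.
apply: (big_morph (fun x => exp (- x))); last by rewrite Ropp_0 exp_0.
by move=> x y; rewrite Ropp_plus_distr exp_plus.
Qed.

Lemma prod_one_sub_le_exp (F : I -> R) :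
  (forall i, P i -> F i <= 1) ->
  \prod_(i <- r | P i) (1 - F i) <= exp (- \sum_(i <- r | P i) F i).
Proof.
move=> F1; rewrite exp_opp_sum.
suff [] : 0 <= \prod_(i <- r | P i) (1 - F i) <= \prod_(i <- r | P i) exp (- F i) by [].
by apply: Rprod_le => i Pi; have := F1 i Pi; have := exp_ineq1_le (- F i); lra.
Qed.

End RealBigOps.

Lemma Rsum_subset (T : finType) (A B : {set T}) (F : T -> R) :
  A \subset B -> (forall i, 0 <= F i) -> \sum_(i in A) F i <= \sum_(i in B) F i.
Proof.
move=> sAB F0; rewrite [X in _ <= X](big_setID A) /= (setIidPr sAB).
have : 0 <= \sum_(i in B :\: A) F i by apply: Rsum_ge0.
lra.
Qed.

Lemma seq_argmin (T : eqType) (f : T -> R) (x0 : T) (s : seq T) :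
  x0 \in s -> exists2 x, x \in s & forall y, y \in s -> f x <= f y.
Proof.
elim: s x0 => // a [|b s] IH x0 _.
  by exists a => [|y]; rewrite ?mem_seq1 // => /eqP->; lra.
have [m ms minm] := IH b (mem_head _ _).
have [le_am | lt_ma] := Rle_lt_dec (f a) (f m).
- exists a; first exact: mem_head.
  move=> y; rewrite in_cons => /orP[/eqP-> | ys]; first lra.
  by have := minm y ys; lra.
- exists m; first by rewrite in_cons ms orbT.
  move=> y; rewrite in_cons => /orP[/eqP-> | ys]; [lra | exact: minm].
Qed.

Lemma set_argmin (T : finType) (f : T -> R) (A : {set T}) x0 :
  x0 \in A -> exists2 x, x \in A & forall y, y \in A -> f x <= f y.
Proof.
move=> x0A; have x0_enum : x0 \in enum A by rewrite mem_enum.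
have [x] := seq_argmin f x0_enum; rewrite mem_enum => xA minx.
by exists x => // y yA; apply: minx; rewrite mem_enum.
Qed.

Lemma exp_m1_lt1 : exp (-1) < 1.
Proof. by rewrite -exp_0; apply: exp_increasing; lra. Qed.

Lemma one_sub_exp_opp_ge s : 0 <= s <= 1 -> s * (1 - exp (-1)) <= 1 - exp (- s).
Proof.
move=> s01; have e_s_pos := exp_pos (- s).
have exp_s_bound : exp (- s) * (1 + s) <= 1.
  have exp_inv : exp (- s) * exp s = 1 by rewrite -exp_plus Rplus_opp_l exp_0.
  by have := exp_ineq1_le s; nra.
have exp_m1_bound : s * exp (- s) <= exp (-1).
  have exp_e1 : exp (-1) = exp (-1 + s) * exp (- s) by rewrite -exp_plus; f_equal; lra.
  by have := exp_ineq1_le (-1 + s); nra.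
nra.
Qed.

Lemma inv_one_sub_exp_opp_le s :
  0 < s -> / (1 - exp (- s)) <= / (1 - exp (-1)) * (/ s + 1).
Proof.
move=> s_pos.
have e1 := exp_m1_lt1; have inv_s := Rinv_0_lt_compat _ s_pos.
have c_pos : 0 < / (1 - exp (-1)) by apply: Rinv_0_lt_compat; lra.
have [s_le1 | s_gt1] := Rle_lt_dec s 1.
- apply: Rle_trans (_ : / (s * (1 - exp (-1))) <= _).
    by apply: Rinv_le_contravar; [nra | apply: one_sub_exp_opp_ge; lra].
  by rewrite Rinv_mult; nra.
- apply: Rle_trans (_ : / (1 - exp (-1)) <= _); last nra.
  apply: Rinv_le_contravar; first lra.
  by have := exp_increasing (- s) (-1); lra.
Qed.

Section WeightedCaroWei.
Variables (V : finType) (e : rel V) (e_sym : symmetric e) (e_irr : irreflexive e).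
Variable P : V -> R.
Hypothesis P_ge0 : forall v, 0 <= P v.

Lemma mem_closed_nbhd v : v \in closed_nbhd e v.
Proof. by rewrite inE eqxx. Qed.

Lemma independent0 : independent e set0.
Proof. by apply/forallP => x; rewrite inE. Qed.

Lemma independentU1 u (S : {set V}) :
  independent e S -> (forall y, y \in S -> ~~ e u y) -> independent e (u |: S).
Proof.
move=> /forallP indS nadj; apply/forallP => x; apply/implyP => xS.
apply/forallP => y; apply/implyP => yS.
move: xS yS; rewrite !in_setU1 => /orP[/eqP-> | xS] /orP[/eqP-> | yS].
- by rewrite e_irr.
- exact: nadj.
- by rewrite e_sym nadj.
- by have /implyP /(_ xS) /forallP /(_ y) /implyP := indS x; apply.
Qed.

(* [P v / nbhd_mass U v] is [0] whenever [P v = 0], even if the mass vanishes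
   ([/ 0 = 0]); this matches the convention built into [ratio_term]. *)
Definition nbhd_mass (U : {set V}) v := \sum_(w in U :&: closed_nbhd e v) P w.

Lemma le_nbhd_mass (U : {set V}) v w :
  w \in U :&: closed_nbhd e v -> P w <= nbhd_mass U v.
Proof.
move=> wUv; rewrite -[P w](big_set1 Rplus) /nbhd_mass.
by apply: Rsum_subset; rewrite ?sub1set.
Qed.

Lemma nbhd_mass_self (U : {set V}) v : v \in U -> P v <= nbhd_mass U v.
Proof. by move=> vU; apply: le_nbhd_mass; rewrite inE vU mem_closed_nbhd. Qed.

Lemma mass_ratio_antimono (U U' : {set V}) v :
  U' \subset U -> v \in U' -> P v / nbhd_mass U v <= P v / nbhd_mass U' v.
Proof.
move=> sU'U vU'; have [Pv_pos | <-] := Rle_lt_or_eq_dec _ _ (P_ge0 v); last first.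
  by rewrite /Rdiv !Rmult_0_l; lra.
apply: Rmult_le_compat_l; first lra.
apply: Rinv_le_contravar; first by have := nbhd_mass_self vU'; lra.
by apply: Rsum_subset => //; apply: setSI.
Qed.

Lemma nbhd_ratio_sum_le1 (U : {set V}) u :
  (forall v, v \in U -> nbhd_mass U u <= nbhd_mass U v) ->
  \sum_(v in U :&: closed_nbhd e u) P v / nbhd_mass U v <= 1.
Proof.
move=> minu; have mass_ge0 : 0 <= nbhd_mass U u by apply: Rsum_ge0.
have [mu_pos | mu0] := Rle_lt_or_eq_dec _ _ mass_ge0.
- apply: Rle_trans
    (_ : _ <= \sum_(v in U :&: closed_nbhd e u) P v * / nbhd_mass U u) _.
    apply: Rsum_le => v; rewrite inE => /andP[vU _].
    apply: Rmult_le_compat_l => //; apply: Rinv_le_contravar => //; exact: minu.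
  by rewrite Rsum_mulr -/(nbhd_mass U u) Rinv_r; lra.
- rewrite big1 => [|v vUu]; first lra.
  have : P v <= nbhd_mass U u := le_nbhd_mass vUu.
  have := P_ge0 v; rewrite -mu0 => ? ?; have -> : P v = 0 by lra.
  by rewrite /Rdiv Rmult_0_l.
Qed.

Lemma greedy_independent (U : {set V}) :
  exists S : {set V}, [/\ S \subset U, independent e S &
    \sum_(v in U) P v / nbhd_mass U v <= INR #|S|].
Proof.
move: {2}#|U| (leqnn #|U|) => n; elim: n U => [|n IH] U U_le;
  have [-> | [x xU]] := set_0Vmem U;
  try by exists set0; split; [exact: sub0set | exact: independent0 |
                               rewrite big_set0 cards0 /=; lra].
1: by move: U_le; rewrite leqn0 cards_eq0 => /eqP U0; rewrite U0 inE in xU.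
have [u uU minu] := set_argmin (nbhd_mass U) xU.
set U' := U :\: closed_nbhd e u.
have U'_le : (#|U'| <= n)%nat.
  have : (0 < #|U :&: closed_nbhd e u|)%nat.
    by apply/card_gt0P; exists u; rewrite inE uU mem_closed_nbhd.
  move=> N_gt0; rewrite cardsD leq_subLR; apply: leq_trans U_le _.
  by rewrite -add1n leq_add2r.
have [S [sSU' indS sumS]] := IH U' U'_le.
have notin_nbhd y : y \in S -> y \notin closed_nbhd e u.
  by move=> /(subsetP sSU'); rewrite inE => /andP[].
exists (u |: S); split.
- by rewrite subUset sub1set uU (subset_trans sSU') ?subsetDl.
- apply: independentU1 => // y /notin_nbhd.
  by rewrite inE negb_or => /andP[].
- have uS : u \notin S by apply: contraTN isT => /notin_nbhd; rewrite mem_closed_nbhd.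
  rewrite cardsU1 uS add1n S_INR (big_setID (closed_nbhd e u)) /=.
  have near_u := nbhd_ratio_sum_le1 minu.
  have far_u : \sum_(v in U :\: closed_nbhd e u) P v / nbhd_mass U v <=
               \sum_(v in U') P v / nbhd_mass U' v.
    by apply: Rsum_le => v; apply: mass_ratio_antimono; apply: subsetDl.
  lra.
Qed.

Lemma weighted_caro_wei :
  \sum_v P v / nbhd_mass setT v <= INR (alpha e).
Proof.
have [S [_ indS sumS]] := greedy_independent setT.
have S_le : INR #|S| <= INR (alpha e) by apply/le_INR/leP/leq_bigmax_cond.
have sum_setT : \sum_v P v / nbhd_mass setT v = \sum_(v in setT) P v / nbhd_mass setT v.
  by apply: eq_bigl => v; rewrite in_setT.
lra.
Qed.

Lemma ratio_le_nbhd_mass v :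
  (forall w, P w <= 1) ->
  P v / (1 - \prod_(w in closed_nbhd e v) (1 - P w)) <=
  / (1 - exp (-1)) * (P v / nbhd_mass setT v + P v).
Proof.
move=> P_le1; have [Pv_pos | <-] := Rle_lt_or_eq_dec _ _ (P_ge0 v); last first.
  by rewrite /Rdiv !Rmult_0_l Rplus_0_r Rmult_0_r; lra.
have mass_pos : 0 < nbhd_mass setT v by have := nbhd_mass_self (in_setT v); lra.
have q_ge : 1 - exp (- nbhd_mass setT v) <= 1 - \prod_(w in closed_nbhd e v) (1 - P w).
  suff : \prod_(w in closed_nbhd e v) (1 - P w) <= exp (- nbhd_mass setT v) by lra.
  by rewrite /nbhd_mass setTI; apply: prod_one_sub_le_exp.
have q_pos : 0 < 1 - exp (- nbhd_mass setT v).
  by have := exp_increasing (- nbhd_mass setT v) 0; rewrite exp_0; lra.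
apply: Rle_trans (_ : P v * / (1 - exp (- nbhd_mass setT v)) <= _).
  by apply: Rmult_le_compat_l; [lra | apply: Rinv_le_contravar].
have := inv_one_sub_exp_opp_le mass_pos; rewrite /Rdiv; nra.
Qed.

End WeightedCaroWei.

Lemma ratio_termE (V : finType) (e : rel V) (K : nat) (p : 'I_K -> V -> R) i v :
  ratio_term e p i v = p i v / qf e p i v.
Proof. by rewrite /ratio_term; case: Req_EM_T => [/= -> | //]; rewrite /Rdiv Rmult_0_l. Qed.

Lemma prob_le1 (K : nat) (p : 'I_K -> R) :
  (forall i, 0 <= p i) -> Rsum p = 1 -> forall i, p i <= 1.
Proof.
move=> p_ge0 p_sum1 i; rewrite -p_sum1 /Rsum (bigD1 i) //= -{1}[p i]Rplus_0_r.
by apply: Rplus_le_compat_l; apply: Rsum_ge0.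
Qed.

Local Close Scope R_scope.

Theorem lemma3 (V : finType) (e : rel V)
  (e_sym : symmetric e) (e_irr : irreflexive e)
  (K : nat) (HK : (0 < K)%N) (p : 'I_K -> V -> R)
  (p_nonneg : forall (i : 'I_K) (v : V), (0 <= p i v)%R)
  (p_sum1 : forall v : V, Rsum (fun i : 'I_K => p i v) = 1%R) :
  forall i : 'I_K,
    (Rsum (fun v : V => ratio_term e p i v)
     <= / (1 - exp (-1)) * (INR (alpha e) + Rsum (fun v : V => p i v)))%R.
Proof.
Local Open Scope R_scope.
move=> i; set c := / (1 - exp (-1)).
have c_pos : 0 < c by apply: Rinv_0_lt_compat; have := exp_m1_lt1; lra.
have p_le1 w : p i w <= 1 by apply: (prob_le1 (p_nonneg ^~ w) (p_sum1 w)).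
have termwise := ratio_le_nbhd_mass e (p_nonneg i) _ p_le1.
have caro_wei := weighted_caro_wei e_sym e_irr (p_nonneg i).
apply: Rle_trans (_ : \sum_v c * (p i v / nbhd_mass e (p i) setT v + p i v) <= _).
  by apply: Rsum_le => v _; rewrite ratio_termE; apply: termwise.
rewrite (eq_bigr (fun v => (p i v / nbhd_mass e (p i) setT v + p i v) * c)) => [|v _];
  last by rewrite Rmult_comm.
rewrite Rsum_mulr big_split /= Rmult_comm /Rsum.
by apply: Rmult_le_compat_l; lra.
Qed.
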